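(* Let $\varrho>1$ and $\widetilde{\sigma}_e^2>0$, and put $\check{x}=\widetilde{\sigma}_e^2/\varrho$, $\hat{x}=\varrho\,\widetilde{\sigma}_e^2$. Let $\sigma_e^2$ be a random variable with probability density $f_{\sigma_e^2}(x)=\frac{1}{2x\ln(\varrho)}$ for $x\in[\check{x},\hat{x}]$ (and $0$ otherwise). Let $P_0>0$, $\eta>0$, $\kappa\in(0,1)$, $\zeta\in(0,1]$, $\alpha>0$, let $d_{p_T}^e,d_{p_T}^b,d_b^e>0$ and $g_b^e\in\mathbb{C}$ be fixed, and set $$|h_{f_T}^b|^2=\eta\,(d_{p_T}^b)^{-2},\qquad |h_b^e|^2=\eta\,(d_b^e)^{-\alpha}|g_b^e|^2,$$ $$\Delta_1=P_0\,\eta\,(d_{p_T}^e)^{-2},\qquad \Delta_2=\Delta_1+\zeta\kappa P_0\,|h_{f_T}^b|^2|h_b^e|^2 .$$ For a threshold $\Gamma_{\text{th}}\in\mathbb{R}$ define the false-alarm probability $\mathcal{P}_f(\Gamma_{\text{th}})=\mathbb{P}(\Delta_1+\sigma_e^2\ge\Gamma_{\text{th}})$, the miss-detection probability $\mathcal{P}_m(\Gamma_{\text{th}})=\mathbb{P}(\Delta_2+\sigma_e^2\le\Gamma_{\text{th}})$, and the total detection error probability $\mathcal{P}_{\text{total}}(\Gamma_{\text{th}})=\mathcal{P}_f(\Gamma_{\text{th}})+\mathcal{P}_m(\Gamma_{\text{th}})$. Assume $\Delta_2-\Delta_1\le\hat{x}-\check{x}$. Then $\Gamma_{\text{th}}^*=\check{x}+\Delta_2$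 minimizes $\mathcal{P}_{\text{total}}$ over $\Gamma_{\text{th}}\in\mathbb{R}$, and the minimum value is $$\mathcal{P}_{\text{total}}^*=\frac{1}{2\ln(\varrho)}\ln\!\left(\frac{\hat{x}}{\check{x}+\zeta\kappa P_0\,|h_{f_T}^b|^2\,|h_b^e|^2}\right).$$
   Context: This models an eavesdropper performing energy detection: it compares its received power $\Delta_i+\sigma_e^2$ ($i=1$ under the hypothesis that the backscatter device is silent, $i=2$ when it transmits) with a threshold $\Gamma_{\text{th}}$. The noise power $\sigma_e^2$ is uncertain: in dB it is uniform on $[\widetilde{\sigma}^2_{e,\text{dB}}-\varrho_{\text{dB}},\widetilde{\sigma}^2_{e,\text{dB}}+\varrho_{\text{dB}}]$, which gives the stated density on $[\check{x},\hat{x}]$. Here $\zeta$ is the backscattering efficiency, $\kappa$ the reflected power fraction, $P_0$ the transmit power, $\eta$ the reference path loss, $d$'s are distances, $\alpha$ the path-loss exponent and $g_b^e$ the small-scale fading coefficient of the device-to-eavesdropper link. *)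

From HB Require Import structures.
From mathcomp Require Import all_boot all_order all_algebra.
From mathcomp Require Import all_classical all_reals all_analysis.
From mathcomp Require Import complex.
Set Implicit Arguments. Unset Strict Implicit. Unset Printing Implicit Defensive.
Import Order.TTheory GRing.Theory Num.Theory.
Local Open Scope ring_scope.

Definition noise_density (R : realType) (rho s : R) (x : R) : R :=
  if (s / rho <= x) && (x <= rho * s) then (2 * x * ln rho)^-1 else 0.

Definition hfb2 (R : realType) (eta dpb : R) : R := eta * dpb ^- 2.

Definition hbe2 (R : realType) (eta dbe alpha : R) (g : R[i]) : R :=
  eta * dbe `^ (- alpha) * (complex.Re g ^+ 2 + complex.Im g ^+ 2).

Definition Delta1 (R : realType) (P0 eta dpe : R) : R := P0 * eta * dpe ^- 2.

Definition Delta2 (R : realType) (P0 eta dpe dpb dbe alpha zeta kappa : R)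
  (g : R[i]) : R :=
  Delta1 P0 eta dpe + zeta * kappa * P0 * hfb2 eta dpb * hbe2 eta dbe alpha g.

From HB Require Import structures.
From mathcomp Require Import all_boot all_order all_algebra.
From mathcomp Require Import all_classical all_reals all_analysis.
From mathcomp Require Import complex.
From mathcomp Require Import ring lra.
Import Order.TTheory GRing.Theory Num.Theory.
Import numFieldNormedType.Exports.
Local Open Scope classical_set_scope.
Local Open Scope ring_scope.

(* With k = 1/(2 ln rho), the distribution function of the noise power is
   y |-> k (ln (clamp y) - ln xc), where clamp y is y clamped to [xc, xh].
   Writing u = G - Delta2 and c = Delta2 - Delta1 >= 0, the total error is
   k (ln xh - ln xc - ln (clamp (u + c) / clamp u)), so minimizing it amounts
   to maximizing the ratio clamp (u + c) / clamp u.  A case analysis shows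
   that this ratio is at most (xc + c) / xc, attained at u = xc, i.e. at
   G = xc + Delta2. *)

Lemma integral_itv_scaled_inv {R : realType} (k a b : R) : 0 < a -> a <= b ->
  (\int[lebesgue_measure]_(x in `[a, b]) (k / x)%:E = (k * ln b - k * ln a)%:E)%E.
Proof.
move=> a_gt0; rewrite le_eqVlt => /orP[/eqP<-|ab].
  by rewrite set_itv1 integral_set1 subrr.
have klnD (x : R) : 0 < x -> is_derive x 1 (fun y => k * ln y) (k / x).
  by move=> x_gt0; have := is_deriveZ k (is_derive1_ln x_gt0).
have klnC (x : R) : 0 < x -> {for x, continuous (fun y => k * ln y)}.
  move=> x_gt0; change {for x, continuous (cst k \* @ln R)}.
  by apply: continuousM; [exact: cst_continuous | exact: continuous_ln].
rewrite (@continuous_FTC2 _ (fun x => k / x) (fun y => k * ln y)) //.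
- apply: continuous_in_subspaceT => x; rewrite inE /= in_itv /= => /andP[ax _].
  change {for x, continuous (cst k \* @GRing.inv R)}.
  apply: continuousM; first exact: cst_continuous.
  by apply: inv_continuous; rewrite gt_eqF // (lt_le_trans a_gt0).
- split.
  + by move=> x; rewrite in_itv /= => /andP[ax _]; case: (klnD x (lt_trans a_gt0 ax)).
  + by apply: cvg_at_right_filter; exact: klnC.
  + by apply: cvg_at_left_filter; apply: klnC; exact: lt_trans ab.
- move=> x; rewrite in_itv /= => /andP[ax _].
  by rewrite derive1E; apply: derive_val; exact: klnD (lt_trans a_gt0 ax).
Qed.

Section Clamp.
Context {R : realFieldType}.
Implicit Types lo hi y u c : R.

Definition clamp lo hi y := if y < lo then lo else if hi < y then hi else y.

Variant clamp_spec lo hi y : R -> Prop :=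
  | ClampBelow of y < lo : clamp_spec lo hi y lo
  | ClampAbove of hi < y : clamp_spec lo hi y hi
  | ClampInside of lo <= y <= hi : clamp_spec lo hi y y.

Lemma clampP lo hi y : clamp_spec lo hi y (clamp lo hi y).
Proof.
rewrite /clamp; case: ltP => [|lo_le_y]; first exact: ClampBelow.
by case: ltP => [|y_le_hi]; [exact: ClampAbove | apply: ClampInside; apply/andP].
Qed.

Lemma clamp_id lo hi y : lo <= y <= hi -> clamp lo hi y = y.
Proof. by move=> /andP[lo_y y_hi]; rewrite /clamp !ltNge lo_y y_hi. Qed.

Lemma clamp_ge lo hi y : lo <= hi -> lo <= clamp lo hi y.
Proof. by case: clampP => [|//|/andP[] //]; rewrite lexx. Qed.

Lemma clamp_shift_le lo hi u c : 0 < lo -> lo <= hi -> 0 <= c ->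
  clamp lo hi (u + c) * lo <= (lo + c) * clamp lo hi u.
Proof.
by move=> lo_gt0 lo_le_hi c_ge0; case: clampP => [||/andP[]];
  case: (clampP lo hi u) => [||/andP[]]; nra.
Qed.

End Clamp.

Lemma ln_clamp_shift_le {R : realType} (lo hi u c : R) :
  0 < lo -> lo <= hi -> 0 <= c ->
  ln (clamp lo hi (u + c)) - ln (clamp lo hi u) <= ln (lo + c) - ln lo.
Proof.
move=> lo_gt0 lo_le_hi c_ge0.
have clamp_gt0 v : 0 < clamp lo hi v by rewrite (lt_le_trans lo_gt0) ?clamp_ge.
rewrite lerBrDr addrAC lerBlDr -!lnM ?posrE ?clamp_gt0 //; last lra.
by rewrite ler_ln ?posrE ?mulr_gt0 ?clamp_gt0 ?clamp_shift_le //; lra.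
Qed.

Section LogUniformNoise.
Context {R : realType} {rho s : R}.
Hypotheses (rho_gt1 : 1 < rho) (s_gt0 : 0 < s).

Local Notation xc := (s / rho).
Local Notation xh := (rho * s).
Local Notation k := (2 * ln rho)^-1.
Local Notation clampn := (clamp xc xh).

Lemma xc_gt0 : 0 < xc.
Proof. by rewrite divr_gt0 // (lt_trans ltr01). Qed.

Lemma xc_le_xh : xc <= xh.
Proof.
have rho_gt0 : 0 < rho by rewrite (lt_trans ltr01).
rewrite ler_pdivrMr // mulrC mulrA ler_peMl ?(ltW s_gt0) //.
by rewrite -expr2 exprn_ege1 ?(ltW rho_gt1).
Qed.

Lemma integral_noise_density_eq0 (A : set R) :
  (forall x, A x -> xc <= x <= xh -> False) ->
  (\int[lebesgue_measure]_(x in A) (noise_density rho s x)%:E = 0%:E)%E.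
Proof.
move=> A_out; apply: integral0_eq => x Ax.
by rewrite /noise_density; case: ifP => // /(A_out x Ax).
Qed.

(* [A] only has to agree with [[a, b]] on the support [[xc, xh]]. *)
Lemma integral_noise_density_itv (A : set R) (a b : R) :
  xc <= a -> a <= b -> b <= xh ->
  (forall x, A x -> xc <= x <= xh -> a <= x <= b) ->
  (forall x, a <= x <= b -> A x) ->
  (\int[lebesgue_measure]_(x in A) (noise_density rho s x)%:E =
    (k * ln b - k * ln a)%:E)%E.
Proof.
move=> xc_le_a a_le_b b_le_xh A_in A_sup.
have a_gt0 : 0 < a by apply: lt_le_trans xc_gt0 xc_le_a.
rewrite -integral_itv_scaled_inv //.
transitivity (\int[lebesgue_measure]_(x in `[a, b]) (noise_density rho s x)%:E)%E.
  rewrite integral_mkcond [RHS]integral_mkcond; apply: eq_integral => x _.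
  rewrite !patchE mem_setE in_itv /=.
  case: (boolP (x \in A)) => [|/negP]; rewrite inE => Ax.
    case: ifP => // x_nab; rewrite /noise_density ifF //.
    by apply/negP => /(A_in x Ax); rewrite x_nab.
  by case: ifP => // x_ab; case: Ax; apply: A_sup.
apply: eq_integral => x; rewrite inE /= in_itv /= => /andP[ax xb].
rewrite /noise_density ifT; last by apply/andP; split; lra.
have ln_rho_gt0 : 0 < ln rho by apply: ln_gt0.
by congr (_%:E); field; rewrite !lt0r_neq0 //; lra.
Qed.

Ltac solve_itv := move=> x /=; rewrite ?in_itv /= ?andbT => *;
  try (apply/andP; split); lra.

Lemma integral_noise_density_le (y : R) :
  (\int[lebesgue_measure]_(x in [set` `]-oo, y]]) (noise_density rho s x)%:E =
   (k * ln (clampn y) - k * ln xc)%:E)%E.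
Proof.
have := xc_le_xh; case: clampP => [y_lt|y_gt|/andP[lo hi]] xc_xh.
- by rewrite subrr; apply: integral_noise_density_eq0; solve_itv.
- by apply: integral_noise_density_itv => //; solve_itv.
- by apply: integral_noise_density_itv => //; solve_itv.
Qed.

Lemma integral_noise_density_ge (y : R) :
  (\int[lebesgue_measure]_(x in [set` `[y, +oo[]) (noise_density rho s x)%:E =
   (k * ln xh - k * ln (clampn y))%:E)%E.
Proof.
have := xc_le_xh; case: clampP => [y_lt|y_gt|/andP[lo hi]] xc_xh.
- by apply: integral_noise_density_itv => //; solve_itv.
- by rewrite subrr; apply: integral_noise_density_eq0; solve_itv.
- by apply: integral_noise_density_itv => //; solve_itv.
Qed.

Section NoiseLaw.
Context {d : measure_display} {T : measurableType d}.
Context {P : probability T R} {sigma2 : T -> R}.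
Hypothesis sigma2_law : forall A : set R, measurable A ->
  P (sigma2 @^-1` A) = (\int[lebesgue_measure]_(x in A) (noise_density rho s x)%:E)%E.

Lemma prob_shift_le (a y : R) :
  P [set t | a + sigma2 t <= y] = (k * ln (clampn (y - a)) - k * ln xc)%:E.
Proof.
have -> : [set t | a + sigma2 t <= y] = sigma2 @^-1` [set` `]-oo, y - a]].
  by apply/seteqP; split => t /=; rewrite in_itv /= => ?; lra.
by rewrite sigma2_law ?integral_noise_density_le.
Qed.

Lemma prob_shift_ge (a y : R) :
  P [set t | y <= a + sigma2 t] = (k * ln xh - k * ln (clampn (y - a)))%:E.
Proof.
have -> : [set t | y <= a + sigma2 t] = sigma2 @^-1` [set` `[y - a, +oo[].
  by apply/seteqP; split => t /=; rewrite in_itv /= andbT => ?; lra.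
by rewrite sigma2_law ?integral_noise_density_ge.
Qed.

End NoiseLaw.
End LogUniformNoise.

Lemma hfb2_ge0 {R : realType} (eta dpb : R) : 0 <= eta -> 0 <= hfb2 eta dpb.
Proof. by move=> eta_ge0; rewrite mulr_ge0 ?invr_ge0 ?sqr_ge0. Qed.

Lemma hbe2_ge0 {R : realType} (eta dbe alpha : R) (g : R[i]) :
  0 <= eta -> 0 <= hbe2 eta dbe alpha g.
Proof. by move=> eta_ge0; rewrite !mulr_ge0 ?powR_ge0 ?addr_ge0 ?sqr_ge0. Qed.

Lemma backscatter_gain_ge0 {R : realType} (P0 eta dpb dbe alpha zeta kappa : R)
    (g : R[i]) : 0 <= P0 -> 0 <= eta -> 0 <= kappa -> 0 <= zeta ->
  0 <= zeta * kappa * P0 * hfb2 eta dpb * hbe2 eta dbe alpha g.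
Proof.
move=> P0_ge0 eta_ge0 kappa_ge0 zeta_ge0.
by rewrite mulr_ge0 ?hbe2_ge0 // mulr_ge0 ?hfb2_ge0 // !mulr_ge0.
Qed.

Theorem lemma1 (R : realType) (d : measure_display) (T : measurableType d)
  (P : probability T R) (sigma2 : T -> R)
  (rho s P0 eta kappa zeta alpha dpe dpb dbe : R) (g : R[i]) :
  1 < rho -> 0 < s -> 0 < P0 -> 0 < eta -> 0 < kappa < 1 -> 0 < zeta <= 1 ->
  0 < alpha -> 0 < dpe -> 0 < dpb -> 0 < dbe ->
  measurable_fun setT sigma2 ->
  (forall A : set R, measurable A ->
     P (sigma2 @^-1` A) =
     (\int[lebesgue_measure]_(x in A) (noise_density rho s x)%:E)%E) ->
  let xc := s / rho in
  let xh := rho * s in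
  let D1 := Delta1 P0 eta dpe in
  let D2 := Delta2 P0 eta dpe dpb dbe alpha zeta kappa g in
  let Pf := fun G : R => P [set t | G <= D1 + sigma2 t] in
  let Pm := fun G : R => P [set t | D2 + sigma2 t <= G] in
  let Ptot := fun G : R => (Pf G + Pm G)%E in
  D2 - D1 <= xh - xc ->
  (forall G : R, (Ptot (xc + D2)%R <= Ptot G)%E) /\
  Ptot (xc + D2)%R =
    ((2 * ln rho)^-1 *
      ln (xh / (xc + zeta * kappa * P0 * hfb2 eta dpb * hbe2 eta dbe alpha g)))%:E.
Proof.
move=> rho_gt1 s_gt0 P0_gt0 eta_gt0 /andP[kappa_gt0 _] /andP[zeta_gt0 _] _ _ _ _ _
  law xc xh D1 D2 Pf Pm Ptot c_le.
set c := zeta * kappa * P0 * hfb2 eta dpb * hbe2 eta dbe alpha g.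
have D2E : D2 = D1 + c by [].
have c_ge0 : 0 <= c by rewrite backscatter_gain_ge0 ?ltW.
have xc_gt0 := xc_gt0 rho_gt1 s_gt0; have xc_le_xh := xc_le_xh rho_gt1 s_gt0.
have k_gt0 : 0 < (2 * ln rho)^-1 by rewrite invr_gt0 mulr_gt0 ?ln_gt0.
have PtotE G : Ptot G = ((2 * ln rho)^-1 * (ln xh - ln xc -
    (ln (clamp xc xh (G - D2 + c)) - ln (clamp xc xh (G - D2)))))%:E.
  rewrite /Ptot /Pf /Pm (prob_shift_ge rho_gt1 s_gt0 law).
  rewrite (prob_shift_le rho_gt1 s_gt0 law) -EFinD.
  have -> : G - D1 = G - D2 + c by rewrite D2E; ring.
  by congr (_%:E); ring.
have clamp_opt : clamp xc xh (xc + D2 - D2 + c) = xc + c.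
  by rewrite addrK clamp_id //; apply/andP; split; lra.
have clamp_opt0 : clamp xc xh (xc + D2 - D2) = xc.
  by rewrite addrK clamp_id // lexx.
split=> [G|]; rewrite !PtotE clamp_opt clamp_opt0.
- by rewrite lee_fin ler_pM2l // lerD2l lerN2 ln_clamp_shift_le.
- rewrite ln_div ?posrE; first by congr (_%:E); ring.
  + exact: lt_le_trans xc_gt0 xc_le_xh.
  + exact: ltr_wpDr c_ge0 xc_gt0.
Qed.
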